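(* For every $\delta\in\mathbb N$, there exist $\varepsilon > 1/4$ and a blowup $H$ of a 5-cycle with minimum degree at least $\delta$ such that $\sum_{v\in V(H)}1/(d(v) + \varepsilon) > 2$.
   Context: A blowup of a graph $F$ is a graph obtained from $F$ by replacing some vertices with cliques and replacing each edge by the complete bipartite graph between the corresponding vertex sets (i.e., vertices $x$ of $F$ are replaced by pairwise disjoint nonempty cliques $Q_x$, and for each edge $xy$ of $F$ every vertex of $Q_x$ is adjacent to every vertex of $Q_y$, with no other edges). $d(v)$ is the degree of $v$ in $H$. *)

From HB Require Import structures.
From mathcomp Require Import all_boot all_order all_algebra.
From mathcomp Require Import reals.
Set Implicit Arguments. Unset Strict Implicit. Unset Printing Implicit Defensive.
Import Order.TTheory GRing.Theory Num.Theory.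

Definition c5_adj (i j : 'I_5) : bool :=
  (j == (i.+1 %% 5) :> nat) || (i == (j.+1 %% 5) :> nat).

Definition simple_graph (T : finType) (e : rel T) : Prop :=
  (forall x, ~~ e x x) /\ (forall x y, e x y = e y x).

(* H = (T, e) is a blowup of C5: the vertex classes f^-1(i) (i in C5) are
   pairwise disjoint nonempty cliques (f surjective), classes of adjacent
   vertices of C5 are completely joined, and there are no other edges. *)
Definition blowup_C5 (T : finType) (e : rel T) : Prop :=
  simple_graph e /\
  exists f : T -> 'I_5,
    (forall i : 'I_5, exists x : T, f x = i) /\
    (forall x y : T, x != y -> e x y = (f x == f y) || c5_adj (f x) (f y)).

Definition deg (T : finType) (e : rel T) (v : T) : nat := #|[set y | e v y]|.

(** Blow up C5 with class sizes n, 1, n, 1, 1 (n = delta + 1).  The singleton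
    class sitting between the two big classes has degree 2n and every other
    vertex has degree n + 1, so the weight sum is
    (2n + 2) / (n + 1 + eps) + 1 / (2n + eps).  The first term falls short of 2
    by 2 eps / (n + 1 + eps), and the second term beats that deficit as long as
    eps - 1/4 is O(1/n); eps = 1/4 + 1/(8n) works. *)
From HB Require Import structures.
From mathcomp Require Import all_boot all_order all_algebra.
From mathcomp Require Import reals.
From mathcomp Require Import zify ring lra.
Import Order.TTheory GRing.Theory Num.Theory.
Set Implicit Arguments. Unset Strict Implicit. Unset Printing Implicit Defensive.

Lemma c5_adjC : symmetric c5_adj.
Proof. by move=> i j; rewrite /c5_adj orbC. Qed.

Definition c5_blowup_rel (T : finType) (f : T -> 'I_5) : rel T :=
  fun x y => (x != y) && ((f x == f y) || c5_adj (f x) (f y)).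

Section BlowupByClassMap.
Variables (T : finType) (f : T -> 'I_5).

Lemma c5_blowup_relP : (forall i, exists x, f x = i) -> blowup_C5 (c5_blowup_rel f).
Proof.
move=> f_surj; split; last by exists f; split=> // x y xy; rewrite /c5_blowup_rel xy.
split=> [x|x y]; first by rewrite /c5_blowup_rel eqxx.
by rewrite /c5_blowup_rel eq_sym (eq_sym (f x)) c5_adjC.
Qed.

Lemma deg_c5_blowup_rel (v : T) :
  (deg (c5_blowup_rel f) v).+1 =
  \sum_(j | (f v == j) || c5_adj (f v) j) #|[set x | f x == j]|.
Proof.
pose N := [set y | (f v == f y) || c5_adj (f v) (f y)].
have -> : (deg (c5_blowup_rel f) v).+1 = #|N|.
  have vN : v \in N by rewrite inE eqxx.
  rewrite (cardsD1 v N) vN /deg; congr (_.+1); apply: eq_card => y.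
  by rewrite !inE eq_sym.
rewrite -sum1dep_card (partition_big f (fun j => (f v == j) || c5_adj (f v) j)) //.
apply: eq_bigr => j Nj; rewrite -sum1dep_card; apply: eq_bigl => y.
by case: (f y =P j) => [->|]; rewrite ?Nj ?andbF.
Qed.

Lemma sum_fiber_card (V : nmodType) (g : 'I_5 -> V) :
  (\sum_(x : T) g (f x) = \sum_(i : 'I_5) g i *+ #|[set x | f x == i]|)%R.
Proof.
rewrite (partition_big f xpredT) //; apply: eq_bigr => i _.
by rewrite -sumr_const; apply: eq_big => [x|x /eqP <-]; rewrite ?inE.
Qed.

End BlowupByClassMap.

Section BlowupBySizes.
Variable c : 'I_5 -> nat.

Definition c5_blowup_vertex : finType := {i : 'I_5 & 'I_(c i)}.

Definition c5_blowup : rel c5_blowup_vertex := c5_blowup_rel (@tag _ _).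

Lemma card_tag_fiber (i : 'I_5) : #|[set v : c5_blowup_vertex | tag v == i]| = c i.
Proof.
rewrite -sum1dep_card; transitivity (\sum_(j | j == i) \sum_(k : 'I_(c j)) 1)%N.
  by rewrite (sig_big_dep _ (fun j _ => true)); apply: eq_bigl => v; rewrite andbT.
by rewrite big_pred1_eq sum1_card card_ord.
Qed.

Lemma c5_blowupP : (forall i, 0 < c i) -> blowup_C5 c5_blowup.
Proof.
move=> c_gt0; apply: c5_blowup_relP => i.
by exists (Tagged (fun j => 'I_(c j)) (Ordinal (c_gt0 i))).
Qed.

Lemma deg_c5_blowup (v : c5_blowup_vertex) :
  (deg c5_blowup v).+1 = \sum_(j | (tag v == j) || c5_adj (tag v) j) c j.
Proof. by rewrite deg_c5_blowup_rel; apply: eq_bigr => j _; rewrite card_tag_fiber. Qed.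

Lemma sum_c5_blowup (V : nmodType) (g : 'I_5 -> V) :
  (\sum_(v : c5_blowup_vertex) g (tag v) = \sum_(i : 'I_5) g i *+ c i)%R.
Proof. by rewrite sum_fiber_card; apply: eq_bigr => i _; rewrite card_tag_fiber. Qed.

End BlowupBySizes.

Arguments c5_blowup : clear implicits.

Definition lopsided_sizes (n : nat) (i : 'I_5) : nat := nth 0 [:: n; 1; n; 1; 1] i.

Lemma deg_lopsided n (v : c5_blowup_vertex (lopsided_sizes n)) :
  deg (c5_blowup (lopsided_sizes n)) v = if tag v == 1 :> nat then n.*2 else n.+1.
Proof.
apply: succn_inj; rewrite deg_c5_blowup big_mkcond !big_ord_recl big_ord0 /=.
case: (tag v) => [[|[|[|[|[|i]]]]] Hi] //=; rewrite /c5_adj /lopsided_sizes /=; lia.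
Qed.

Local Open Scope ring_scope.

Lemma weight_gt2 (R : realFieldType) (x eps : R) :
  1 <= x -> 8 * x * eps = 2 * x + 1 ->
  2 < (2 * x + 2) / (x + 1 + eps) + 1 / (2 * x + eps).
Proof.
move=> x_ge1 xeps.
have eps_gt : 1 / 4 < eps by nra.
have eps_le : eps <= 3 / 8 by nra.
have A_gt0 : 0 < x + 1 + eps by lra.
have B_gt0 : 0 < 2 * x + eps by lra.
rewrite -subr_gt0.
have -> : (2 * x + 2) / (x + 1 + eps) + 1 / (2 * x + eps) - 2 =
  (x + 1 + eps - 2 * eps * (2 * x + eps)) / ((x + 1 + eps) * (2 * x + eps)).
  by field; rewrite !gt_eqF.
(* 4 x eps = x + 1/2, so the numerator is 1/2 + eps - 2 eps^2 *)
by rewrite divr_gt0 ?mulr_gt0 //; nra.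
Qed.

Lemma lopsided_weight_gt2 (R : realFieldType) (n : nat) (eps : R) :
  (0 < n)%N -> 8 * n%:R * eps = 2 * n%:R + 1 ->
  2 < \sum_(v : c5_blowup_vertex (lopsided_sizes n))
        1 / ((deg (c5_blowup (lopsided_sizes n)) v)%:R + eps).
Proof.
move=> n_gt0 neps; under eq_bigr do rewrite deg_lopsided.
rewrite (sum_c5_blowup _ (fun i => 1 / ((if i == 1 :> nat then n.*2 else n.+1)%:R + eps))).
rewrite !big_ord_recl big_ord0 /lopsided_sizes /=.
rewrite -(mulr_natl (1 / (n.+1%:R + eps)) n) !mulr1n -(natr1 n) -mul2n natrM.
rewrite [X in _ < X](_ : _ = (2 * n%:R + 2) / (n%:R + 1 + eps) + 1 / (2 * n%:R + eps)).
  by apply: weight_gt2 neps; rewrite ler1n.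
ring.
Qed.

Theorem proposition4p2 (R : realType) (delta : nat) :
  exists (eps : R) (T : finType) (e : rel T),
    1 / 4 < eps /\
    blowup_C5 e /\
    (forall v : T, (delta <= deg e v)%N) /\
    2 < \sum_(v : T) 1 / ((deg e v)%:R + eps).
Proof.
pose n := delta.+1; pose eps : R := 1 / 4 + 1 / (8 * n%:R).
have neps : 8 * n%:R * eps = 2 * n%:R + 1 by rewrite /eps; field; rewrite pnatr_eq0.
exists eps, _, (c5_blowup (lopsided_sizes n)); split.
  by rewrite /eps ltrDl divr_gt0 // mulr_gt0 ?ltr0n.
split; first by apply: c5_blowupP => -[[|[|[|[|[|i]]]]] Hi].
split=> [v|]; first by rewrite deg_lopsided; case: ifP; lia.
exact: lopsided_weight_gt2.
Qed.
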